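(* Let $\mathcal{O}_K$ be a discrete valuation ring with fraction field $K$ and valuation $v_K$, let $L/K$ be a finite separable extension of degree $n$ with a Hopf Galois structure $(H,\langle\,,\rangle)$, let $W$ be a $K$-basis of $H$ and $B=\{\gamma_j\}_{j=1}^n$ an $\mathcal{O}_K$-basis of $\mathcal{O}_L$. Let $\beta\in\mathcal{O}_L$. Then $\beta$ is a free generator of $\mathcal{O}_L$ as $\mathfrak{A}_H$-module (i.e. the map $\mathfrak{A}_H\to\mathcal{O}_L$, $h\mapsto\langle h,\beta\rangle$, is a bijection) if and only if $$v_K\big(\det M_\beta(H_W,L_B)\big)=I_W(H,L).$$
   Context: A Hopf Galois structure on $L/K$ is a $K$-Hopf algebra $H$ with a $K$-linear action $\langle\,,\rangle\colon H\otimes_K L\to L$ making $L$ an $H$-module algebra such that $L\otimes_K H\to\mathrm{End}_K(L)$ is bijective. The associated order is $\mathfrak{A}_H=\{h\in H:\langle h,x\rangle\in\mathcal{O}_L\ \forall x\in\mathcal{O}_L\}$. With $W=\{w_i\}$, write $\langle w_i,\gamma_j\rangle=\sum_k m_{ij}^{(k)}\gamma_k$; the matrix of the action $M(H_W,L_B)\in\mathcal{M}_{n^2\times n}(K)$ has entry $m_{ij}^{(k)}$ in row $n(j-1)+k$, column $i$. A reduced matrix of it is $D\in\mathrm{GL}_n(K)$ such that $U M(H_W,L_B)=\begin{pmatrix}D\\0\end{pmatrix}$ for some $U\in\mathrm{GL}_{n^2}(\mathcal{O}_K)$; such $D$ exists, and the index $I_W(H,L):=v_K(\det D)$ does not depend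 on the choice of $D$. For $\beta\in L$, $M_\beta(H_W,L_B)\in\mathcal{M}_n(K)$ is the matrix of the $K$-linear map $H\to L$, $h\mapsto\langle h,\beta\rangle$, with respect to the bases $W$ and $B$. *)

From HB Require Import structures.
From mathcomp Require Import all_boot all_order all_algebra all_field.
Set Implicit Arguments. Unset Strict Implicit. Unset Printing Implicit Defensive.
Import Order.TTheory GRing.Theory Num.Theory.
Local Open Scope ring_scope.

(* ---------- the base: a DVR O_K with fraction field K, given by its
   normalized discrete valuation v_K : K^* -> Z (the value at 0 is
   irrelevant: v_K 0 = +oo is handled explicitly below). ---------- *)
Record is_dval (K : fieldType) (v : K -> int) : Prop := {
  dval_mul : forall x y, x != 0 -> y != 0 -> v (x * y) = v x + v y;
  dval_add : forall x y, x != 0 -> y != 0 -> x + y != 0 ->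
               Num.min (v x) (v y) <= v (x + y);
  dval_surj : forall z : int, exists x, x != 0 /\ v x = z }.

Definition OK (K : fieldType) (v : K -> int) : pred K :=
  fun x => (x == 0) || (0 <= v x).

Definition OL (K : fieldType) (v : K -> int) (L : fieldExtType K) (x : L) : Prop :=
  exists p : {poly K},
    [/\ p \is monic, forall i, p`_i \in OK v & root (map_poly (in_alg L) p) x].

Definition OK_basis (K : fieldType) (v : K -> int) (L : fieldExtType K) n
    (B : n.-tuple L) : Prop :=
  [/\ forall j, OL v (tnth B j),
      forall x, OL v x -> exists a : 'I_n -> K,
         (forall j, a j \in OK v) /\ x = \sum_j a j *: tnth B j
    & forall a : 'I_n -> K, (forall j, a j \in OK v) ->
         \sum_j a j *: tnth B j = 0 -> forall j, a j = 0].

(* H is a finite-dimensional K-algebra; the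
   tensor square H (x)_K H is represented by coordinate matrices with
   respect to the canonical basis e = vbasis {:H}:
   t : 'M_d  stands for  \sum_{i,j} t i j  e_i (x) e_j. ---------- *)
Section Hopf.
Variables (K : fieldType) (H : falgType K).
Local Notation d := (\dim (fullv : {vspace H})).
Local Notation e := (vbasis (fullv : {vspace H})).

(* image of a tensor under the bilinear map induced by f *)
Definition tsum (V : lmodType K) (t : 'M[K]_d) (f : H -> H -> V) : V :=
  \sum_(i < d) \sum_(j < d) t i j *: f (tnth e i) (tnth e j).

Definition is_linearK (V W : lmodType K) (f : V -> W) : Prop :=
  forall (a : K) x y, f (a *: x + y) = a *: f x + f y.

Record is_Hopf (Delta : H -> 'M[K]_d) (eps : H -> K) (S : H -> H) : Prop := {
  Delta_lin : is_linearK Delta;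
  eps_lin : is_linearK (eps : H -> K^o);
  S_lin : is_linearK S;
  (* coassociativity: (Delta (x) id) Delta = (id (x) Delta) Delta *)
  coassoc : forall h k l m,
    \sum_(i < d) Delta h i m * Delta (tnth e i) k l =
    \sum_(j < d) Delta h k j * Delta (tnth e j) l m;
  counitl : forall h, tsum (Delta h) (fun a b => eps a *: b) = h;
  counitr : forall h, tsum (Delta h) (fun a b => eps b *: a) = h;
  (* Delta and eps are algebra maps *)
  Delta1 : forall p q, Delta 1 p q = coord e p 1 * coord e q 1;
  DeltaM : forall g h p q, Delta (g * h) p q =
    \sum_(i < d) \sum_(j < d) \sum_(k < d) \sum_(l < d)
       Delta g i j * Delta h k l *
       coord e p (tnth e i * tnth e k) * coord e q (tnth e j * tnth e l);
  eps1 : eps 1 = 1;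
  epsM : forall g h, eps (g * h) = eps g * eps h;
  antipodel : forall h, tsum (Delta h) (fun a b => S a * b) = eps h *: 1;
  antipoder : forall h, tsum (Delta h) (fun a b => a * S b) = eps h *: 1 }.

Record HopfGalois (L : fieldExtType K) (Delta : H -> 'M[K]_d) (eps : H -> K)
    (S : H -> H) (act : H -> L -> L) : Prop := {
  HG_Hopf : is_Hopf Delta eps S;
  act_linl : forall x, is_linearK (fun h => act h x);
  act_linr : forall h, is_linearK (act h);
  act1 : forall x, act 1 x = x;
  actM : forall g h x, act (g * h) x = act g (act h x);
  act_mul : forall h x y, act h (x * y) = tsum (Delta h) (fun a b => act a x * act b y);
  act_one : forall h, act h 1 = eps h *: 1;
  (* L (x)_K H -> End_K(L), x (x) h |-> (y |-> x <h,y>) is bijective;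
     elements of L (x) H are written uniquely as \sum_i x_i (x) e_i *)
  HG_surj : forall f : 'End(L), exists x : 'I_d -> L,
      forall y, f y = \sum_(i < d) x i * act (tnth e i) y;
  HG_inj : forall x : 'I_d -> L,
      (forall y, \sum_(i < d) x i * act (tnth e i) y = 0) -> forall i, x i = 0 }.

End Hopf.

Definition assoc_order (K : fieldType) (v : K -> int) (L : fieldExtType K)
    (H : falgType K) (act : H -> L -> L) (h : H) : Prop :=
  forall x, OL v x -> OL v (act h x).

Definition free_generator (K : fieldType) (v : K -> int) (L : fieldExtType K)
    (H : falgType K) (act : H -> L -> L) (beta : L) : Prop :=
  [/\ forall h, assoc_order v act h -> OL v (act h beta),
      forall h1 h2, assoc_order v act h1 -> assoc_order v act h2 ->
         act h1 beta = act h2 beta -> h1 = h2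
    & forall y, OL v y -> exists2 h, assoc_order v act h & act h beta = y].

(* matrix of the action M(H_W, L_B) in M_{n^2 x n}(K): entry m_ij^(k)
   (with <w_i, gamma_j> = \sum_k m_ij^(k) gamma_k) in row n*j + k
   (0-based; = mxvec_index j k), column i *)
Definition action_matrix (K : fieldType) (L : fieldExtType K) (H : falgType K)
    (act : H -> L -> L) n (W : n.-tuple H) (B : n.-tuple L) : 'M[K]_(n * n, n) :=
  \matrix_(r, i) mxvec (\matrix_(j < n, k < n) coord B k (act (tnth W i) (tnth B j))) 0 r.

Definition Mbeta (K : fieldType) (L : fieldExtType K) (H : falgType K)
    (act : H -> L -> L) n (W : n.-tuple H) (B : n.-tuple L) (beta : L) : 'M[K]_n :=
  \matrix_(k, i) coord B k (act (tnth W i) beta).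

Lemma leq_n_nn n : (n <= n * n)%N.
Proof. by case: n => // n; rewrite leq_pmulr. Qed.

Definition GL_OK (K : fieldType) (v : K -> int) m (U : 'M[K]_m) : Prop :=
  [/\ U \in unitmx, forall i j, U i j \in OK v & forall i j, invmx U i j \in OK v].

Definition reduced_matrix (K : fieldType) (v : K -> int) n
    (M : 'M[K]_(n * n, n)) (D : 'M[K]_n) : Prop :=
  D \in unitmx /\ exists U : 'M[K]_(n * n), GL_OK v U /\
    U *m M = castmx (subnKC (leq_n_nn n), erefl n) (col_mx D (0 : 'M_(n * n - n, n))).

(* The argument is linear algebra over the discrete valuation ring O_K.
   Writing h = sum_i x_i w_i, the associated order A_H corresponds to the set
   of x such that M x is integral, M = M(H_W, L_B), and h |-> <h, beta>
   corresponds to x |-> M_beta x (section Coordinates; the Hopf structure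
   enters only through the bilinearity of the action).  If U M = (D ; 0) with
   U in GL_{n^2}(O_K), then M x is integral iff D x is (section ReducedMatrix),
   so A_H = D^-1 O_K^n and beta is a free generator iff P = M_beta D^-1 maps
   O_K^n bijectively onto itself, i.e. iff P lies in GL_n(O_K), i.e. iff
   v(det M_beta) = v(det D) (section FreeGeneratorMatrix).  A reduced matrix
   exists by Gaussian elimination over O_K with pivots of minimal valuation
   (section IntegralMatrices). *)

From HB Require Import structures.
From mathcomp Require Import all_boot all_order all_algebra all_field.
From mathcomp Require Import fingroup perm zify.
Set Implicit Arguments. Unset Strict Implicit. Unset Printing Implicit Defensive.
Import Order.TTheory GRing.Theory Num.Theory.
Local Open Scope ring_scope.

Section StackZero.
Variables (R : pzRingType) (n : nat).

Definition stack0 p (D : 'M[R]_(n, p)) : 'M[R]_(n * n, p) :=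
  castmx (subnKC (leq_n_nn n), erefl p) (col_mx D (0 : 'M_(n * n - n, p))).

Lemma stack0_top p (D : 'M[R]_(n, p)) (r : 'I_(n * n)) c (hr : (r < n)%N) :
  stack0 D r c = D (Ordinal hr) c.
Proof.
rewrite castmxE /=.
have -> : cast_ord (esym (subnKC (leq_n_nn n))) r = lshift (n * n - n) (Ordinal hr).
  exact: val_inj.
by rewrite col_mxEu; congr (D _ _); apply: val_inj.
Qed.

Lemma stack0_bottom p (D : 'M[R]_(n, p)) (r : 'I_(n * n)) c :
  (n <= r)%N -> stack0 D r c = 0.
Proof.
move=> nr; have r_lt : (r - n < n * n - n)%N by rewrite ltn_sub2r // (leq_ltn_trans nr).
rewrite castmxE /=.
have -> : cast_ord (esym (subnKC (leq_n_nn n))) r = rshift n (Ordinal r_lt).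
  by apply: val_inj; rewrite /= subnKC.
by rewrite col_mxEd mxE.
Qed.

Lemma stack0_0 p : stack0 (0 : 'M[R]_(n, p)) = 0.
Proof.
apply/matrixP=> r c; have [rn|nr] := ltnP r n; last by rewrite stack0_bottom ?mxE.
by rewrite (stack0_top _ _ rn) !mxE.
Qed.

Lemma mul_stack0 p q (D : 'M[R]_(n, p)) (x : 'M[R]_(p, q)) :
  stack0 D *m x = stack0 (D *m x).
Proof.
apply/matrixP=> r c; have [rn|nr] := ltnP r n.
  by rewrite stack0_top !mxE; apply: eq_bigr => k _; rewrite stack0_top.
by rewrite stack0_bottom // mxE big1 // => k _; rewrite stack0_bottom ?mul0r.
Qed.

Lemma stack0_mxOver p (S : {pred R}) (D : 'M[R]_(n, p)) :
  0 \in S -> (stack0 D \is a mxOver S) = (D \is a mxOver S).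
Proof.
move=> S0; apply/mxOverP/mxOverP=> D_S i j.
  have := D_S (widen_ord (leq_n_nn n) i) j.
  rewrite (stack0_top (r := widen_ord (leq_n_nn n) i) D j (ltn_ord i)).
  by rewrite (_ : Ordinal _ = i) //; apply: val_inj.
have [rn|nr] := ltnP i n; last by rewrite stack0_bottom.
by rewrite (stack0_top _ _ rn).
Qed.

Lemma triangular_stack0 (B : 'M[R]_(n * n, n)) :
  (forall (i : 'I_(n * n)) (j : 'I_n), (j < i)%N -> B i j = 0) ->
  B = stack0 (\matrix_(i, j) B (widen_ord (leq_n_nn n) i) j).
Proof.
move=> B_triang; apply/matrixP=> r c; have [rn|nr] := ltnP r n.
  by rewrite stack0_top mxE; congr (B _ _); apply: val_inj.
by rewrite stack0_bottom // B_triang // (leq_trans (ltn_ord c)).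
Qed.

End StackZero.

Lemma kernel_vector (F : fieldType) m (A : 'M[F]_m) :
  \det A = 0 -> exists2 x : 'cV[F]_m, x != 0 & A *m x = 0.
Proof.
move=> detA0; have /det0P[u u_neq0 uA0] : \det A^T == 0 by rewrite det_tr detA0.
exists u^T; first by rewrite trmx_eq0.
by rewrite -[A]trmxK -trmx_mul uA0 trmx0.
Qed.

Section LinearMaps.
Variables (F : fieldType) (V V' : lmodType F) (f : V -> V').
Hypothesis f_lin : is_linearK f.

Lemma is_linearK0 : f 0 = 0.
Proof.
have := f_lin 1 0 0; rewrite scale1r addr0 scale1r => f00.
by apply: (@addrI _ (f 0)); rewrite addr0 -f00.
Qed.

Lemma is_linearK_sum m (a : 'I_m -> F) (u : 'I_m -> V) :
  f (\sum_i a i *: u i) = \sum_i a i *: f (u i).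
Proof.
elim/big_rec2: _ => [|i y1 y2 _ <-]; first exact: is_linearK0.
by rewrite f_lin.
Qed.

End LinearMaps.

Section DiscreteValuation.
Variables (K : fieldType) (v : K -> int).
Hypothesis hv : is_dval v.

Lemma dval1 : v 1 = 0.
Proof.
have := dval_mul hv (oner_neq0 K) (oner_neq0 K); rewrite mulr1.
by move: (v 1) => a; lia.
Qed.

Lemma dvalN x : x != 0 -> v (- x) = v x.
Proof.
have N1_neq0 : (-1 : K) != 0 by rewrite oppr_eq0 oner_neq0.
have vN1 : v (-1) = 0.
  have := dval_mul hv N1_neq0 N1_neq0; rewrite mulrNN mulr1 dval1.
  by move: (v (-1)) => a; lia.
by move=> x_neq0; rewrite -mulN1r dval_mul // vN1 add0r.
Qed.

Lemma dvalV x : x != 0 -> v x^-1 = - v x.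
Proof.
move=> x_neq0; have := dval_mul hv x_neq0 (invr_neq0 x_neq0).
by rewrite mulfV // dval1; move: (v x) (v x^-1) => a b; lia.
Qed.

Lemma dvalX x k : x != 0 -> v (x ^+ k) = k%:Z * v x.
Proof.
move=> x_neq0; elim: k => [|k IHk]; first by rewrite expr0 dval1 mul0r.
by rewrite exprS dval_mul ?expf_neq0 // IHk intS mulrDl mul1r.
Qed.

Lemma OKE x : (x \in OK v) = (x == 0) || (0 <= v x).
Proof. by rewrite unfold_in. Qed.

Lemma OK_subring_closed : subring_closed (OK v).
Proof.
split; first by rewrite OKE dval1 orbT.
- move=> x y; rewrite !OKE => x_OK y_OK.
  have [y0|y_neq0] := eqVneq y 0; first by rewrite y0 subr0.
  have [x0|x_neq0] := eqVneq x 0.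
    by rewrite x0 sub0r oppr_eq0 dvalN.
  have [//|xy_neq0] := eqVneq (x - y) 0.
  move: x_OK y_OK; rewrite (negbTE x_neq0) (negbTE y_neq0) /= => vx_ge0 vy_ge0.
  have Ny_neq0 : - y != 0 by rewrite oppr_eq0.
  apply: le_trans (dval_add hv x_neq0 Ny_neq0 xy_neq0).
  by rewrite le_min vx_ge0 dvalN.
- move=> x y; rewrite !OKE mulf_eq0.
  have [-> //|x_neq0] := eqVneq x 0; have [-> //|y_neq0] := eqVneq y 0.
  by rewrite dval_mul //= => *; apply: addr_ge0.
Qed.

HB.instance Definition _ := GRing.isSubringClosed.Build K (OK v) OK_subring_closed.

Lemma OK_unit_dval x : x != 0 -> x \in OK v -> x^-1 \in OK v -> v x = 0.
Proof.
move=> x_neq0; rewrite !OKE invr_eq0 (negbTE x_neq0) /= dvalV //.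
by move: (v x) => a; lia.
Qed.

Lemma OK_div x y : y != 0 -> (x != 0 -> v y <= v x) -> x / y \in OK v.
Proof.
move=> y_neq0; have [-> _|x_neq0 /(_ isT)] := eqVneq x 0; first by rewrite mul0r rpred0.
rewrite OKE mulf_eq0 invr_eq0 (negbTE x_neq0) (negbTE y_neq0) /=.
by rewrite dval_mul ?invr_eq0 // dvalV // subr_ge0.
Qed.

(* Multiplying by a power of a uniformizer brings any finite family into O_K. *)
Lemma clear_denominators (I : finType) (f : I -> K) :
  exists2 c : K, c != 0 & forall i, c * f i \in OK v.
Proof.
have [pi [pi_neq0 vpi]] := dval_surj hv 1.
set k := (\max_i `|v (f i)|)%N.
exists (pi ^+ k) => [|i]; first by rewrite expf_neq0.
rewrite OKE mulf_eq0 expf_eq0 (negbTE pi_neq0) andbF /=.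
have [-> //|fi_neq0] := eqVneq (f i) 0.
rewrite dval_mul ?expf_neq0 // dvalX // vpi mulr1.
have := @leq_bigmax _ (fun i => `|v (f i)|%N) i; rewrite -/k.
by move: (v (f i)) => a; lia.
Qed.

Lemma det_mxOver m (A : 'M[K]_m) : A \is a mxOver (OK v) -> \det A \in OK v.
Proof.
move=> /mxOverP A_OK; rewrite /determinant rpred_sum // => s _.
by rewrite rpredM ?rpredX ?rpredN ?rpred1 // rpred_prod.
Qed.

Section IntegralClosure.
Variable L : fieldExtType K.

(* O_K as a ring in its own right, so that the library theory of integral
   elements over a ring morphism applies to O_L. *)
Definition OKring : Type := {x : K | x \in OK v}.
HB.instance Definition _ := SubType.copy OKring {x : K | x \in OK v}.
HB.instance Definition _ := [Choice of OKring by <:].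
HB.instance Definition _ := [SubChoice_isSubComNzRing of OKring by <:].

Definition OK_to_L : {rmorphism OKring -> L} := (in_alg L \o val)%FUN.

Lemma OL_integralOver x : OL v x <-> integralOver OK_to_L x.
Proof.
have val0 : val (0 : OKring) = 0 by [].
split=> [[p [p_monic p_OK px0]] | [q q_monic qx0]].
  pose q := map_poly (insubd (0 : OKring)) p.
  have p_val : map_poly val q = p.
    apply/polyP=> i; rewrite coef_map_id0 // coef_map_id0 ?insubdK //.
    by apply: val_inj; rewrite insubdK ?rpred0.
  exists q; last by rewrite map_poly_comp /= p_val.
  apply/monicP/val_inj; rewrite -[LHS](lead_coef_map_inj val_inj) //= p_val.
  exact/monicP.
exists (map_poly val q); split.
- by rewrite monicE (lead_coef_map_inj val_inj) // (monicP q_monic).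
- by move=> i; rewrite coef_map_id0 //; apply: valP.
- by rewrite -map_poly_comp.
Qed.

Lemma OL_lincomb m (a : 'I_m -> K) (u : 'I_m -> L) :
  (forall i, a i \in OK v) -> (forall i, OL v (u i)) -> OL v (\sum_i a i *: u i).
Proof.
move=> a_OK u_OL; apply/OL_integralOver.
apply: (big_ind (integralOver OK_to_L)) => [|y z|i _]; first exact: integral0.
  exact: integral_add.
rewrite -mulr_algl; apply: integral_mul; last exact/OL_integralOver.
by have := integral_id OK_to_L (Sub (a i) (a_OK i)).
Qed.

End IntegralClosure.

Section IntegralMatrices.

Lemma invmx_right m (A B : 'M[K]_m) : A *m B = 1%:M -> invmx A = B.
Proof.
move=> AB1; have [A_unit _] := mulmx1_unit AB1.
by rewrite -[RHS]mul1mx -(mulVmx A_unit) -mulmxA AB1 mulmx1.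
Qed.

Lemma GL_OKE m (U : 'M[K]_m) :
  GL_OK v U <-> [/\ U \in unitmx, U \is a mxOver (OK v) & invmx U \is a mxOver (OK v)].
Proof. by split=> -[? /mxOverP ? /mxOverP ?]. Qed.

Lemma GL_OK1 m : GL_OK v (1%:M : 'M[K]_m).
Proof.
have one_OK : (1%:M : 'M[K]_m) \is a mxOver (OK v) by rewrite mxOver_scalar ?rpred0 ?rpred1.
by apply/GL_OKE; rewrite unitmx1 invmx1 one_OK.
Qed.

Lemma GL_OK_mul m (U1 U2 : 'M[K]_m) : GL_OK v U1 -> GL_OK v U2 -> GL_OK v (U1 *m U2).
Proof.
move=> /GL_OKE[U1_unit U1_OK U1i_OK] /GL_OKE[U2_unit U2_OK U2i_OK]; apply/GL_OKE.
have -> : invmx (U1 *m U2) = invmx U2 *m invmx U1.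
  by apply: invmx_right; rewrite mulmxA mulmxK // mulmxV.
by rewrite unitmx_mul U1_unit U2_unit !mxOverM.
Qed.

Lemma GL_OK_perm m (s : 'S_m) : GL_OK v (perm_mx s).
Proof.
have perm_OK (t : 'S_m) : perm_mx t \is a mxOver (OK v).
  by apply/mxOverP=> i j; rewrite !mxE rpred_nat.
have perm_inv : invmx (perm_mx s : 'M[K]_m) = perm_mx s^-1.
  by apply: invmx_right; rewrite -perm_mxM mulgV perm_mx1.
by apply/GL_OKE; rewrite unitmx_perm perm_inv !perm_OK.
Qed.

(* 1 - N with N^2 = 0 is invertible over O_K, with inverse 1 + N. *)
Lemma GL_OK_unipotent m (N : 'M[K]_m) :
  N \is a mxOver (OK v) -> N *m N = 0 -> GL_OK v (1%:M - N).
Proof.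
move=> N_OK NN0; have inv1N : (1%:M - N) *m (1%:M + N) = 1%:M.
  by rewrite mulmxBl !mul1mx mulmxDr mulmx1 NN0 addr0 addrK.
have [unit1N _] := mulmx1_unit inv1N; have /GL_OKE[_ one_OK _] := GL_OK1 m.
by apply/GL_OKE; rewrite unit1N (invmx_right inv1N) rpredB ?rpredD.
Qed.

Definition zero_below m n (A : 'M[K]_(m, n)) (k : nat) : Prop :=
  forall (i : 'I_m) (j : 'I_n), (j < k)%N -> (j < i)%N -> A i j = 0.

Lemma clear_column m n (A : 'M[K]_(m, n)) (r : 'I_m) (k : 'I_n) :
  r = k :> nat -> zero_below A k -> A r k != 0 ->
  (forall i : 'I_m, (k < i)%N -> A i k / A r k \in OK v) ->
  exists2 E, GL_OK v E & zero_below (E *m A) k.+1.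
Proof.
move=> r_k A_below Ark_neq0 quot_OK.
pose N := \matrix_(i, j) (if (k < i)%N && (j == r) then A i k / A r k else 0).
have NE i j : N i j = if (k < i)%N && (j == r) then A i k / A r k else 0.
  by rewrite mxE.
have N_OK : N \is a mxOver (OK v).
  apply/mxOverP=> i j; rewrite NE; case: ifP => [/andP[ki _]|_]; last exact: rpred0.
  exact: quot_OK.
have NN0 : N *m N = 0.
  apply/matrixP=> i j; rewrite !mxE big1 // => l _; rewrite !NE.
  by case: (eqVneq l r) => [->|_]; rewrite ?r_k ?ltnn ?andbF ?mulr0 ?mul0r.
have EA i j : ((1%:M - N) *m A) i j =
    A i j - (if (k < i)%N then A i k / A r k * A r j else 0).
  rewrite mulmxBl mul1mx !mxE (bigD1 r) //= big1 => [|l /negbTE l_neq_r].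
    by rewrite NE eqxx andbT addr0; case: ifP; rewrite ?mul0r.
  by rewrite NE l_neq_r andbF mul0r.
exists (1%:M - N); first exact: GL_OK_unipotent.
move=> i j; rewrite ltnS leq_eqVlt => /orP[/eqP jk ji|jk ji]; rewrite EA.
  have -> : j = k by apply: val_inj.
  by rewrite -jk ji divfK ?subrr.
by rewrite A_below // [A r j]A_below ?r_k // mulr0 if_same subr0.
Qed.

(* One step of elimination over O_K: choose in column k, among the rows
   >= k, an entry of minimal valuation, move it to row k and clear below. *)
Lemma pivot_step m n (A : 'M[K]_(m, n)) (k : 'I_n) :
  zero_below A k -> exists2 E, GL_OK v E & zero_below (E *m A) k.+1.
Proof.
move=> A_below.
pose P := [pred i : 'I_m | (k <= i)%N && (A i k != 0)].
have [p0 Pp0|noP] := pickP P; last first.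
  exists 1%:M; first exact: GL_OK1.
  move=> i j; rewrite mul1mx ltnS leq_eqVlt => /orP[/eqP jk ki|]; last exact: A_below.
  have -> : j = k by apply: val_inj.
  by apply/eqP; have := noP i; rewrite /= -jk ltnW //= => /negbFE.
have [p /andP[kp Apk_neq0] p_min] := arg_minP (fun i => v (A i k)) Pp0.
have km : (k < m)%N by apply: leq_trans (ltn_ord p).
pose r : 'I_m := Ordinal km; pose s := tperm r p.
have s_ge (i : 'I_m) : (k <= i)%N -> (k <= s i)%N.
  by rewrite /s; case: tpermP => [_|_|//] _; [exact: kp | exact: leqnn].
have s_gt (i : 'I_m) (j : 'I_n) : (j < k)%N -> (j < i)%N -> (j < s i)%N.
  by rewrite /s; case: tpermP => [_|_|//] jk _; [exact: leq_trans jk kp | exact: jk].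
pose A' := perm_mx s *m A.
have A'E i j : A' i j = A (s i) j by rewrite /A' -row_permE mxE.
have [E E_GL EA'_below] : exists2 E, GL_OK v E & zero_below (E *m A') k.+1.
  apply: (@clear_column _ _ A' r k erefl).
  - by move=> i j jk ji; rewrite A'E A_below ?s_gt.
  - by rewrite A'E tpermL.
  move=> i ki; rewrite !A'E tpermL; apply: OK_div => // Asik_neq0.
  by apply: p_min; rewrite /P /= Asik_neq0 andbT s_ge // ltnW.
exists (E *m perm_mx s); first by apply: GL_OK_mul => //; apply: GL_OK_perm.
by rewrite -mulmxA.
Qed.

Lemma triangularize m n (A : 'M[K]_(m, n)) :
  exists2 U, GL_OK v U & zero_below (U *m A) n.
Proof.
suff: forall k, (k <= n)%N -> exists2 U, GL_OK v U & zero_below (U *m A) k by apply.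
elim=> [|k IHk] kn.
  by exists 1%:M => //; apply: GL_OK1.
have [U U_GL UA_below] := IHk (ltnW kn).
have [E E_GL EUA_below] := @pivot_step _ _ (U *m A) (Ordinal kn) UA_below.
by exists (E *m U); [exact: GL_OK_mul | rewrite -mulmxA].
Qed.

Lemma mxOver_col m n (A : 'M[K]_(m, n)) :
  (forall j, A *m delta_mx j (0 : 'I_1) \is a mxOver (OK v)) -> A \is a mxOver (OK v).
Proof.
move=> A_col; apply/mxOverP=> i j.
by have /mxOverP/(_ i 0) := A_col j; rewrite -colE mxE.
Qed.

Lemma invmx_mxOver m (A : 'M[K]_m) :
  A \is a mxOver (OK v) -> \det A != 0 -> v (\det A) = 0 -> invmx A \is a mxOver (OK v).
Proof.
move=> /mxOverP A_OK detA_neq0 vdetA.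
have detAV_OK : (\det A)^-1 \in OK v by rewrite OKE dvalV // vdetA oppr0 lexx orbT.
rewrite /invmx unitmxE unitfE detA_neq0; apply/mxOverP=> i j.
rewrite !mxE rpredM // /cofactor rpredM ?rpredX ?rpredN ?rpred1 // det_mxOver //.
by apply/mxOverP=> a b; rewrite !mxE.
Qed.

Lemma dval_det_inverse_pair m (A B : 'M[K]_m) :
  A \is a mxOver (OK v) -> B \is a mxOver (OK v) -> A *m B = 1%:M -> v (\det A) = 0.
Proof.
move=> A_OK B_OK AB1; have detAB : \det A * \det B = 1 by rewrite -det_mulmx AB1 det1.
have detA_neq0 : \det A != 0 by apply: contra_eq_neq detAB => ->; rewrite mul0r eq_sym oner_neq0.
apply: OK_unit_dval; rewrite ?det_mxOver //.
by rewrite -[_^-1]mulr1 -detAB mulKf // det_mxOver.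
Qed.

End IntegralMatrices.

Section ReducedMatrix.
Variables (n : nat) (M : 'M[K]_(n * n, n)).

Lemma reduction_exists : exists U D, GL_OK v U /\ U *m M = stack0 D.
Proof.
have [U U_GL UM_below] := triangularize M.
exists U, (\matrix_(i, j) (U *m M) (widen_ord (leq_n_nn n) i) j); split=> //.
by apply: triangular_stack0 => i j ji; apply: UM_below.
Qed.

Variables (U : 'M[K]_(n * n)) (D : 'M[K]_n).
Hypotheses (U_GL : GL_OK v U) (UM : U *m M = stack0 D).

Lemma reduced_mulmx p (x : 'M[K]_(n, p)) : M *m x = invmx U *m stack0 (D *m x).
Proof. by case: U_GL => U_unit _ _; rewrite -mul_stack0 -UM -mulmxA mulKmx. Qed.

(* M x and D x are integral together: they differ by an element of GL(O_K). *)
Lemma reduced_mxOver p (x : 'M[K]_(n, p)) :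
  (M *m x \is a mxOver (OK v)) = (D *m x \is a mxOver (OK v)).
Proof.
have /GL_OKE[_ U_OK Ui_OK] := U_GL.
apply/idP/idP=> [Mx_OK|Dx_OK]; last by rewrite reduced_mulmx mxOverM ?stack0_mxOver ?rpred0.
by rewrite -(stack0_mxOver _ (rpred0 _)) -mul_stack0 -UM -mulmxA mxOverM.
Qed.

Lemma reduced_ker p (x : 'M[K]_(n, p)) : D *m x = 0 -> M *m x = 0.
Proof. by move=> Dx0; rewrite reduced_mulmx Dx0 stack0_0 mulmx0. Qed.

End ReducedMatrix.

(* A column x stands for the coordinates of an
   element h of H; M x collects the coordinates of the <h, gamma_j> and Mb x
   those of <h, beta>.  The two hypotheses below are the only links between
   M and Mb that are needed; they hold in the Hopf setting (see Coordinates). *)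
Section FreeGeneratorMatrix.
Variables (n : nat) (M : 'M[K]_(n * n, n)) (Mb : 'M[K]_n).

Definition in_order (x : 'cV[K]_n) : bool := M *m x \is a mxOver (OK v).

Definition order_bijective : Prop :=
  (forall x1 x2, in_order x1 -> in_order x2 -> Mb *m x1 = Mb *m x2 -> x1 = x2) /\
  (forall c : 'cV[K]_n, c \is a mxOver (OK v) -> exists2 x, in_order x & Mb *m x = c).

Hypothesis order_int : forall x, in_order x -> Mb *m x \is a mxOver (OK v).
Hypothesis ker_sub : forall x : 'cV[K]_n, M *m x = 0 -> Mb *m x = 0.
Variables (U : 'M[K]_(n * n)) (D : 'M[K]_n).
Hypotheses (U_GL : GL_OK v U) (UM : U *m M = stack0 D).

Let in_orderE x : in_order x = (D *m x \is a mxOver (OK v)).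
Proof. exact: (reduced_mxOver U_GL UM). Qed.

Lemma transition_mxOver : D \in unitmx -> Mb *m invmx D \is a mxOver (OK v).
Proof.
move=> D_unit; apply: mxOver_col => j; rewrite -mulmxA; apply: order_int.
by rewrite in_orderE mulKVmx //; apply/mxOverP=> a b; rewrite mxE rpred_nat.
Qed.

Lemma dval_det_transition : D \in unitmx -> \det Mb != 0 ->
  v (\det (Mb *m invmx D)) = v (\det Mb) - v (\det D).
Proof.
rewrite unitmxE unitfE => detD_neq0 detMb_neq0.
by rewrite det_mulmx det_inv dval_mul ?invr_eq0 // dvalV.
Qed.

(* Injectivity on the order forces D and Mb to be invertible: a kernel
   vector of D lies in the order and is killed by Mb, and a kernel vector of
   Mb can be scaled into the order. *)
Lemma order_injective_unit :
  (forall x1 x2, in_order x1 -> in_order x2 -> Mb *m x1 = Mb *m x2 -> x1 = x2) ->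
  D \in unitmx /\ \det Mb != 0.
Proof.
move=> inj; have order0 : in_order 0 by rewrite /in_order mulmx0 rpred0.
split.
  rewrite unitmxE unitfE; apply/eqP=> /kernel_vector[x x_neq0 Dx0].
  have Mx0 := reduced_ker U_GL UM Dx0.
  have Ox : in_order x by rewrite /in_order Mx0 rpred0.
  by move/eqP: x_neq0; apply; apply: inj; rewrite // ker_sub // mulmx0.
apply/eqP=> /kernel_vector[x x_neq0 Mbx0].
have [c c_neq0 cDx_OK] := clear_denominators (fun ij : 'I_n * 'I_1 => (D *m x) ij.1 ij.2).
have Ocx : in_order (c *: x).
  by rewrite in_orderE -scalemxAr; apply/mxOverP=> i j; rewrite mxE (cDx_OK (i, j)).
have := inj _ _ Ocx order0; rewrite -scalemxAr Mbx0 scaler0 mulmx0 => /(_ erefl).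
by move/eqP; rewrite scaler_eq0 (negbTE c_neq0) (negbTE x_neq0).
Qed.

(* Main criterion: bijectivity of the order onto O_K^n amounts to
   Mb D^-1 in GL_n(O_K), i.e. to v(det Mb) = v(det D). *)
Theorem order_bijectiveP :
  order_bijective <-> [/\ D \in unitmx, \det Mb != 0 & v (\det Mb) = v (\det D)].
Proof.
split=> [[inj surj] | [D_unit detMb_neq0 vdet]].
  have [D_unit detMb_neq0] := order_injective_unit inj.
  have Mb_unit : Mb \in unitmx by rewrite unitmxE unitfE.
  have inv_OK : D *m invmx Mb \is a mxOver (OK v).
    apply: mxOver_col => j; have [|x Ox Mbx] := surj (delta_mx j 0).
      by apply/mxOverP=> a b; rewrite mxE rpred_nat.
    by rewrite -mulmxA -Mbx mulKmx // -in_orderE.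
  split=> //; apply/eqP; rewrite -subr_eq0 -dval_det_transition //.
  apply/eqP/(dval_det_inverse_pair (transition_mxOver D_unit) inv_OK).
  by rewrite mulmxA mulmxKV ?mulmxV.
have Mb_unit : Mb \in unitmx by rewrite unitmxE unitfE.
have inv_OK : D *m invmx Mb \is a mxOver (OK v).
  have inv : invmx (Mb *m invmx D) = D *m invmx Mb.
    by apply: invmx_right; rewrite mulmxA mulmxKV ?mulmxV.
  rewrite -inv invmx_mxOver ?transition_mxOver // ?dval_det_transition ?vdet ?subrr //.
  by rewrite det_mulmx det_inv mulf_neq0 ?invr_eq0 // -unitfE -unitmxE.
split=> [x1 x2 _ _ /(congr1 (mulmx (invmx Mb)))|c c_OK].
  by rewrite !mulKmx.
exists (invmx Mb *m c); last by rewrite mulKVmx.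
by rewrite in_orderE mulmxA mxOverM.
Qed.

End FreeGeneratorMatrix.

Section Coordinates.
Variables (L : fieldExtType K) (H : falgType K) (n : nat) (act : H -> L -> L).
Variables (W : n.-tuple H) (B : n.-tuple L) (beta : L).
Hypotheses (act_linl : forall y, is_linearK (fun h => act h y))
           (act_linr : forall h, is_linearK (act h)).
Hypotheses (dimL : \dim (fullv : {vspace L}) = n) (W_basis : basis_of fullv W)
           (B_OK : OK_basis v B) (beta_OL : OL v beta).

Definition Bcoord (y : L) : 'cV[K]_n := \col_k coord B k y.
Definition Wvec (x : 'cV[K]_n) : H := \sum_i x i 0 *: tnth W i.

(* An O_K-basis of O_L is a K-basis of L (clear denominators of a relation). *)
Lemma OK_basis_basis : basis_of fullv B.
Proof.
have [_ _ B_indep] := B_OK.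
rewrite basisEfree subvf size_tuple dimL leqnn /= andbT; apply/freeP=> a a0 i.
have [c c_neq0 ca_OK] := clear_denominators a.
have : \sum_j (c * a j) *: tnth B j = c *: \sum_j a j *: B`_j.
  by rewrite scaler_sumr; apply: eq_bigr => j _; rewrite scalerA (tnth_nth 0).
by rewrite a0 scaler0 => /(B_indep _ ca_OK)/(_ i)/eqP; rewrite mulf_eq0 (negbTE c_neq0) => /eqP.
Qed.

Lemma Bcoord_sum (c : 'cV[K]_n) : Bcoord (\sum_k c k 0 *: tnth B k) = c.
Proof.
apply/matrixP=> k j; rewrite (ord1 j) mxE.
rewrite -[RHS](coord_sum_free (fun k => c k 0) k (basis_free OK_basis_basis)).
by congr (coord B k _); apply: eq_bigr => i _; rewrite (tnth_nth 0).
Qed.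

Lemma BcoordK y : \sum_k (Bcoord y) k 0 *: tnth B k = y.
Proof.
rewrite [RHS](coord_basis OK_basis_basis (memvf y)).
by apply: eq_bigr => k _; rewrite mxE (tnth_nth 0).
Qed.

Lemma Bcoord_inj : injective Bcoord.
Proof. by move=> y1 y2 eq_y; rewrite -[y1]BcoordK -[y2]BcoordK eq_y. Qed.

Lemma OL_BcoordP y : OL v y <-> Bcoord y \is a mxOver (OK v).
Proof.
have [B_OL B_span _] := B_OK; split=> [/B_span[a [a_OK ->]] | /mxOverP y_OK].
  have -> : \sum_k a k *: tnth B k = \sum_k (\col_k a k : 'cV[K]_n) k 0 *: tnth B k.
    by apply: eq_bigr => k _; rewrite mxE.
  by rewrite Bcoord_sum; apply/mxOverP=> k j; rewrite mxE.
by rewrite -[y]BcoordK; apply: OL_lincomb.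
Qed.

Lemma WvecK h : Wvec (\col_i coord W i h) = h.
Proof.
rewrite [RHS](coord_basis W_basis (memvf h)).
by apply: eq_bigr => i _; rewrite mxE (tnth_nth 0).
Qed.

Lemma Wvec_inj : injective Wvec.
Proof.
move=> x1 x2 eq_x; apply/matrixP=> i j; rewrite (ord1 j).
have Wcoord x : coord W i (Wvec x) = x i 0.
  rewrite -(coord_sum_free (fun i => x i 0) i (basis_free W_basis)).
  by congr (coord W i _); apply: eq_bigr => k _; rewrite (tnth_nth 0).
by rewrite -!Wcoord eq_x.
Qed.

Local Notation M := (action_matrix act W B).
Local Notation Mb := (Mbeta act W B beta).

Lemma act_Wvec x y : act (Wvec x) y = \sum_i x i 0 *: act (tnth W i) y.
Proof. exact: (is_linearK_sum (act_linl y)). Qed.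

Lemma Mbeta_mul x : Mb *m x = Bcoord (act (Wvec x) beta).
Proof.
apply/matrixP=> k j; rewrite (ord1 j) !mxE act_Wvec linear_sum /=.
by apply: eq_bigr => i _; rewrite linearZ mxE mulrC.
Qed.

Lemma action_matrix_mul x j k :
  (M *m x) (mxvec_index j k) 0 = coord B k (act (Wvec x) (tnth B j)).
Proof.
rewrite !mxE act_Wvec linear_sum /=.
by apply: eq_bigr => i _; rewrite linearZ mxE mxvecE mxE mulrC.
Qed.

Lemma assoc_orderP x : assoc_order v act (Wvec x) <-> in_order M x.
Proof.
have [B_OL B_span _] := B_OK.
have act_B_OL : in_order M x -> forall j, OL v (act (Wvec x) (tnth B j)).
  move=> /mxOverP Mx_OK j; apply/OL_BcoordP/mxOverP=> k i.
  by rewrite (ord1 i) mxE -action_matrix_mul.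
split=> [x_order | /act_B_OL x_order y /B_span[a [a_OK ->]]].
  apply/mxOverP=> r i; rewrite (ord1 i); case/mxvec_indexP: r => j k.
  by rewrite action_matrix_mul; have /OL_BcoordP/mxOverP/(_ k 0) := x_order _ (B_OL j); rewrite mxE.
by rewrite (is_linearK_sum (act_linr _)); apply: OL_lincomb.
Qed.

Lemma order_to_OL x : in_order M x -> Mb *m x \is a mxOver (OK v).
Proof. by move=> /assoc_orderP x_order; rewrite Mbeta_mul -OL_BcoordP; apply: x_order. Qed.

Lemma Mbeta_ker (x : 'cV[K]_n) : M *m x = 0 -> Mb *m x = 0.
Proof.
move=> Mx0; have act_B0 j : act (Wvec x) (tnth B j) = 0.
  apply: Bcoord_inj; apply/matrixP=> k i; rewrite (ord1 i) !mxE -action_matrix_mul Mx0 mxE.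
  by rewrite linear0.
rewrite Mbeta_mul -[beta]BcoordK (is_linearK_sum (act_linr _)) big1 => [|j _].
  by apply/matrixP=> k i; rewrite !mxE linear0.
by rewrite act_B0 scaler0.
Qed.

Lemma free_generatorP : free_generator v act beta <-> order_bijective M Mb.
Proof.
have Wcoord_order h : assoc_order v act h -> in_order M (\col_i coord W i h).
  by move=> h_order; apply/assoc_orderP; rewrite WvecK.
split=> [[_ inj surj] | [inj surj]].
  split=> [x1 x2 /assoc_orderP x1_order /assoc_orderP x2_order | c c_OK].
    by rewrite !Mbeta_mul => /Bcoord_inj /(inj _ _ x1_order x2_order) /Wvec_inj.
  have y_OL : OL v (\sum_k c k 0 *: tnth B k) by apply/OL_BcoordP; rewrite Bcoord_sum.
  have [h h_order act_h] := surj _ y_OL.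
  exists (\col_i coord W i h); first exact: Wcoord_order.
  by rewrite Mbeta_mul WvecK act_h Bcoord_sum.
split=> [h h_order | h1 h2 h1_order h2_order act_eq | y /OL_BcoordP y_OK].
- exact: h_order.
- rewrite -[h1]WvecK -[h2]WvecK; congr Wvec.
  by apply: inj; rewrite ?Wcoord_order // !Mbeta_mul !WvecK act_eq.
- have [x x_order Mbx] := surj _ y_OK.
  exists (Wvec x); first exact/assoc_orderP.
  by apply: Bcoord_inj; rewrite -Mbeta_mul.
Qed.

End Coordinates.

End DiscreteValuation.

Unset Implicit Arguments.

Theorem mainTheorem2 (K : fieldType) (v : K -> int) (L : fieldExtType K)
    (H : falgType K) (n : nat)
    (Delta : H -> 'M[K]_(\dim (fullv : {vspace H}))) (eps : H -> K) (S : H -> H)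
    (act : H -> L -> L) (W : n.-tuple H) (B : n.-tuple L) (beta : L) :
  is_dval v ->
  \dim (fullv : {vspace L}) = n ->
  separable 1%VS (fullv : {vspace L}) ->
  HopfGalois Delta eps S act ->
  basis_of fullv W ->
  OK_basis v B ->
  OL v beta ->
  (free_generator v act beta <->
   exists D : 'M[K]_n, reduced_matrix v (action_matrix act W B) D /\
     \det (Mbeta act W B beta) != 0 /\
     v (\det (Mbeta act W B beta)) = v (\det D)).
Proof.
move=> hv dimL _ [_ act_linl act_linr _ _ _ _ _ _] W_basis B_OK beta_OL.
set M := action_matrix act W B.
have order_int := order_to_OL hv (W := W) act_linl act_linr dimL B_OK beta_OL.
have ker_sub := Mbeta_ker hv (W := W) beta act_linl act_linr dimL B_OK.
rewrite (free_generatorP hv act_linl act_linr dimL W_basis B_OK beta_OL).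
split=> [gen | [D [[D_unit [U [U_GL UM]]] [detMb_neq0 vdet]]]].
  have [U [D [U_GL UM]]] := reduction_exists hv M.
  have [D_unit detMb_neq0 vdet] := (order_bijectiveP hv order_int ker_sub U_GL UM).1 gen.
  by exists D; split=> //; split=> //; exists U.
exact/(order_bijectiveP hv order_int ker_sub U_GL UM).
Qed.
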